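(* Let $q=2^r>2$ and $n\ge 1$. Then $$\beta_q^{(n)}(x_1,\dots,x_n)=\sum_{1\le i_1,\dots,i_n\le 2^r-2}x_1^{i_1}x_2^{i_2}\cdots x_n^{i_n}\;+\;x_1+\cdots+x_n$$ is a local permutation polynomial in $\mathbb{F}_q[x_1,\dots,x_n]$ of degree $n(2^r-2)$.
   Context: $\mathbb{F}_q$ is the finite field with $q$ elements. A polynomial $f\in\mathbb{F}_q[x_1,\dots,x_n]$ is a local permutation polynomial (LPP) if, for each $i\in\{1,\dots,n\}$ and each choice of $(a_1,\dots,a_{i-1},a_{i+1},\dots,a_n)\in\mathbb{F}_q^{n-1}$, the univariate polynomial $f(a_1,\dots,a_{i-1},x_i,a_{i+1},\dots,a_n)$ induces a bijection of $\mathbb{F}_q$. Degree means total degree. *)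

From HB Require Import structures.
From mathcomp Require Import all_boot all_order all_algebra all_field.
From mathcomp Require Import mpoly.
Set Implicit Arguments. Unset Strict Implicit. Unset Printing Implicit Defensive.
Import GRing.Theory.
Local Open Scope ring_scope.

(* Local permutation polynomial: for every coordinate i and every choice of the
   other coordinates (a j, j <> i; the value a i is ignored), the univariate map
   x |-> f(a_1,..,x,..,a_n) is a bijection of F. *)
Definition is_LPP (F : finFieldType) (n : nat) (f : {mpoly F[n]}) : Prop :=
  forall (i : 'I_n) (a : 'I_n -> F),
    bijective (fun x : F => f.@[fun j => if j == i then x else a j]).

(* beta_q^(n) = sum_{1 <= i_1..i_n <= q-2} x_1^{i_1} ... x_n^{i_n} + x_1 + ... + x_n,
   the exponent i_j being (e j).+1 with e j : 'I_(q-2). *)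
Definition beta (F : finFieldType) (n : nat) : {mpoly F[n]} :=
  \sum_(e : {ffun 'I_n -> 'I_(#|F| - 2)}) \prod_(j < n) 'X_j ^+ (e j).+1
  + \sum_(j < n) 'X_j.

From HB Require Import structures.
From mathcomp Require Import all_boot all_order all_algebra all_field.
From mathcomp Require Import mpoly.
From mathcomp Require Import zify.
Set Implicit Arguments. Unset Strict Implicit. Unset Printing Implicit Defensive.
Import GRing.Theory.
Local Open Scope ring_scope.

(* Evaluating beta at a point gives \prod_j S(x_j) + \sum_j x_j, where
   S(y) = y + y^2 + ... + y^(q-2).  Since y^(q-1) = 1 for y <> 0, S(y) = -1 off
   {0, 1}, while S(0) = 0 and S(1) = q - 2; in characteristic 2 this makes S the
   indicator of F \ {0, 1}.  Fixing all coordinates but one, beta becomes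
   x |-> c S(x) + x + d with c in {0, 1}: a translation when c = 0, otherwise a
   translation composed with the involution x |-> x + S(x), which fixes 0 and 1
   and swaps y and y + 1 elsewhere.  The degree is carried by the monomial
   (x_1 ... x_n)^(q-2), which occurs exactly once and dominates all others. *)

Lemma msize_sum_mpolyX (R : nzRingType) (n : nat) (I : finType)
    (m : I -> 'X_{1..n}) (i0 : I) :
  (forall i, m i = m i0 -> i = i0) ->
  (forall i, mdeg (m i) <= mdeg (m i0))%N ->
  msize (\sum_i 'X_[m i] : {mpoly R[n]}) = (mdeg (m i0)).+1.
Proof.
move=> m_i0_uniq mdeg_le; apply/eqP; rewrite eqn_leq; apply/andP; split.
  apply: leq_trans (mmeasure_sum mdeg _ _ _) _.
  by apply/bigmax_leqP => i _; rewrite msizeX ltnS.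
apply: msize_mdeg_lt; rewrite mcoeff_msupp raddf_sum (bigD1 i0) //= mcoeffX eqxx.
rewrite big1 ?addr0 ?oner_neq0 // => i /eqP i_neq_i0.
by rewrite mcoeffX; case: eqP => // /m_i0_uniq.
Qed.

Section PowerSum.
Variable F : finFieldType.

Definition powsum (y : F) : F := \sum_(k < #|F| - 2) y ^+ k.+1.

Lemma powsum0 : powsum 0 = 0.
Proof. by apply: big1 => k _; rewrite expr0n. Qed.

Lemma powsum1 : powsum 1 = (#|F| - 2)%:R.
Proof.
by rewrite /powsum (eq_bigr (fun=> 1)) => [|k _]; rewrite ?expr1n // sumr_const card_ord.
Qed.

Lemma powsum_neq01 y : y != 0 -> y != 1 -> powsum y = -1.
Proof.
move=> y_neq0 y_neq1.
have cardF_gt1 : (1 < #|F|)%N := finNzRing_gt1 F.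
have y_unit_order : y ^+ (#|F| - 2).+1 = 1.
  have -> : ((#|F| - 2).+1 = #|F|.-1)%N by lia.
  by apply: (mulfI y_neq0); rewrite mulr1 -exprS prednK ?expf_card //; lia.
have := subrX1 y (#|F| - 2).+1.
rewrite y_unit_order subrr big_ord_recl expr0 => /esym /eqP.
by rewrite mulf_eq0 subr_eq0 (negbTE y_neq1) addrC addr_eq0 => /eqP.
Qed.

Lemma meval_beta n (v : 'I_n -> F) :
  (beta F n).@[v] = \prod_(j < n) powsum (v j) + \sum_(j < n) v j.
Proof.
rewrite /beta mevalD !raddf_sum /=; congr (_ + _); last first.
  by apply: eq_bigr => j _; rewrite mevalXU.
rewrite /powsum bigA_distr_bigA /=; apply: eq_bigr => e _.
by rewrite rmorph_prod; apply: eq_bigr => j _; rewrite rmorphXn /= mevalXU.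
Qed.

Lemma meval_beta_coord n (i : 'I_n) (a : 'I_n -> F) x :
  (beta F n).@[fun j => if j == i then x else a j] =
  (\prod_(j < n | j != i) powsum (a j)) * powsum x + x
    + \sum_(j < n | j != i) a j.
Proof.
rewrite meval_beta (bigD1 i) // (bigD1 i (P := xpredT)) // eqxx mulrC addrA.
by congr (_ * _ + _ + _); apply: eq_bigr => j /negbTE ->.
Qed.

Definition beta_mnm n (e : {ffun 'I_n -> 'I_(#|F| - 2)}) : 'X_{1..n} :=
  [multinom (e j).+1 | j < n].

Lemma beta_mnm_inj n : injective (@beta_mnm n).
Proof.
move=> e e' /mnmP eq_mnm; apply/ffunP => j.
by apply: val_inj; have := eq_mnm j; rewrite !mnmE => -[].
Qed.

Lemma mdeg_beta_mnm n e : mdeg (@beta_mnm n e) = (\sum_(j < n) (e j).+1)%N.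
Proof. by rewrite mdegE; apply: eq_bigr => j _; rewrite mnmE. Qed.

Lemma beta_mpolyX n :
  beta F n = \sum_e 'X_[@beta_mnm n e] + \sum_(j < n) 'X_[U_(j)].
Proof.
congr (_ + _); apply: eq_bigr => e _.
by rewrite mpolyXE_id; apply: eq_bigr => j _; rewrite mnmE.
Qed.

Lemma msize_beta n :
  (1 < n * (#|F| - 2))%N -> msize (beta F n) = (n * (#|F| - 2)).+1.
Proof.
move=> deg_gt1.
have q2_gt0 : (0 < #|F| - 2)%N by move: deg_gt1; case: (#|F| - 2)%N; rewrite ?muln0.
have top_lt : ((#|F| - 2).-1 < #|F| - 2)%N by rewrite ltn_predL.
pose top : {ffun 'I_n -> 'I_(#|F| - 2)} := [ffun=> Ordinal top_lt].
have mdeg_top : mdeg (beta_mnm top) = (n * (#|F| - 2))%N.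
  rewrite mdeg_beta_mnm (eq_bigr (fun=> #|F| - 2)%N) => [|j _].
    by rewrite sum_nat_const card_ord.
  by rewrite ffunE /= prednK.
have mdeg_le e : (mdeg (@beta_mnm n e) <= n * (#|F| - 2))%N.
  rewrite mdeg_beta_mnm -[X in (X * _)%N]card_ord -sum_nat_const.
  by apply: leq_sum => j _.
pose mon (i : {ffun 'I_n -> 'I_(#|F| - 2)} + 'I_n) :=
  match i with inl e => beta_mnm e | inr j => U_(j)%MM end.
have -> : beta F n = \sum_i 'X_[mon i] by rewrite big_sumType beta_mpolyX.
rewrite -mdeg_top (@msize_sum_mpolyX _ _ _ mon (inl top)) // => [[e|j] /= eq_top|[e|j]].
- by rewrite (beta_mnm_inj eq_top).
- by move: deg_gt1; rewrite -mdeg_top -eq_top mdeg1.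
- by rewrite /= mdeg_top mdeg_le.
- by rewrite /= mdeg1 mdeg_top ltnW.
Qed.

End PowerSum.

Section Char2.
Variables (F : finFieldType) (r : nat).
Hypothesis cardF : #|F| = (2 ^ r)%N.

Let pchar2F : 2%N \in [pchar F] := card_finPcharP cardF isT.

Lemma powsum_pchar2 (y : F) : powsum y = ((y != 0) && (y != 1))%:R.
Proof.
have [->|y_neq0] := eqVneq y 0; first exact: powsum0.
have [->|y_neq1] := eqVneq y 1; last by rewrite powsum_neq01 // (oppr_pchar2 pchar2F).
rewrite powsum1 cardF.
have -> : (2 ^ r - 2 = 2 * (2 ^ r.-1 - 1))%N by case: r => //= s; rewrite expnS mulnBr.
by rewrite natrM (pcharf0 pchar2F) mul0r.
Qed.

Lemma addr_powsum_invol : involutive (fun x : F => x + powsum x).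
Proof.
move=> x; rewrite !powsum_pchar2.
have [/andP[x_neq0 x_neq1]|x_01] := boolP ((x != 0) && (x != 1)); last first.
  by rewrite addr0 (negbTE x_01) addr0.
have -> : (x + 1 != 0) && (x + 1 != 1).
  by rewrite addr_eq0 (oppr_pchar2 pchar2F) x_neq1 -subr_eq0 addrK.
by rewrite -addrA (addrr_pchar2 pchar2F) addr0.
Qed.

Lemma bij_powsum_affine (c d : F) :
  c = 0 \/ c = 1 -> bijective (fun x => c * powsum x + x + d).
Proof.
have bij_addr : bijective (fun x : F => x + d).
  by exists (fun y => y - d) => x; rewrite ?addrK ?subrK.
case=> ->.
  by apply: (@eq_bij F F _ bij_addr) => x; rewrite /= mul0r add0r.
apply: (@eq_bij F F _ (bij_comp bij_addr (inv_bij addr_powsum_invol))) => x.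
by rewrite /= mul1r (addrC (powsum x)).
Qed.

Lemma beta_LPP n : is_LPP (beta F n).
Proof.
move=> i a.
have prod_01 : \prod_(j < n | j != i) powsum (a j) = 0 \/
               \prod_(j < n | j != i) powsum (a j) = 1.
  apply: (big_ind (fun c => c = 0 \/ c = 1)); first by right.
    by move=> u w [->|->] [->|->]; rewrite ?mul0r ?mulr0 ?mulr1; auto.
  by move=> j _; rewrite powsum_pchar2; case: (_ && _); auto.
apply: (@eq_bij F F _ (bij_powsum_affine (\sum_(j < n | j != i) a j) prod_01)) => x.
by rewrite meval_beta_coord.
Qed.

End Char2.

Local Close Scope ring_scope.

Theorem mainTheorem9 (F : finFieldType) (r n : nat) :
  #|F| = 2 ^ r -> 2 < 2 ^ r -> 0 < n ->
  is_LPP (beta F n) /\ msize (beta F n) = (n * (2 ^ r - 2)).+1.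
Proof.
move=> cardF q_gt2 n_gt0; split; first exact: (beta_LPP cardF).
have q_ge4 : 2 ^ 2 <= 2 ^ r by rewrite leq_exp2l // -(@ltn_exp2l 2 1 r).
by rewrite msize_beta cardF //; nia.
Qed.
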